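(* Let $p$ be a prime and $\alpha\in\mathbb{Q}_p$ an algebraic number. Then the continued fractions $[b_0,b_1,\dots]$ produced from $\alpha$ by Algorithm A and by Algorithm B (defined in the context) always converge to a $p$-adic number.
   Context: Let $\mathcal{R}=\{-\frac{p-1}{2},\dots,0,\dots,\frac{p-1}{2}\}$ if $p$ is odd, and $\mathcal{R}=\{0,1\}$ if $p=2$. Every nonzero $\alpha\in\mathbb{Q}_p$ is written uniquely as $\alpha=\sum_{n\ge r}a_np^n$ with $r=v_p(\alpha)$, $a_n\in\mathcal{R}$, $a_r\ne0$. Put $s(\alpha)=\sum_{n=r}^{0}a_np^n$, $t(\alpha)=\sum_{n=r}^{-1}a_np^n$ (empty sums are $0$). For an algebraic $\alpha\in\mathbb{Q}_p$ whose minimal polynomial over $\mathbb{Q}$ has degree $d$, with trace $\operatorname{Tr}(\alpha)$, and $\operatorname{round}(x)$ the integer nearest to the real $x$, define $\bar s(\alpha)=\operatorname{round}\!\left(\frac{\operatorname{Tr}(\alpha)/d-s(\alpha)}{p}\right)p+s(\alpha)$ and $\bar t(\alpha)=\operatorname{round}\!\left(\operatorname{Tr}(\alpha)/d-t(\alpha)\right)+t(\alpha)$. An expansion algorithm starts with $\alpha_0=\alpha$; at step $n$ it chooses $b_n$ by a rule; if $\alpha_n=b_n$ it stops, otherwise it sets $\alpha_{n+1}=\frac1{\alpha_n-b_n}$. The continued fraction $[b_0,b_1,\dots]=b_0+\cfrac{1}{b_1+\cfrac{1}{b_2+\cdots}}$ converges if its convergents $[b_0,\dots,b_n]$ converge in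 $\mathbb{Q}_p$. Algorithm A: $b_0=\bar s(\alpha_0)$; for $n\ge1$, $b_n=\bar s(\alpha_n)$ if $v_p(\alpha_n)=0$ and $b_n=\bar t(\alpha_n)$ if $v_p(\alpha_n)<0$. Algorithm B: $b_n=\bar s(\alpha_n)$ if $n$ is even and $b_n=\bar t(\alpha_n)$ if $n$ is odd. *)

From HB Require Import structures.
From mathcomp Require Import all_boot all_order all_algebra.
From Stdlib Require Import ClassicalEpsilon.
Set Implicit Arguments.
Unset Strict Implicit.
Unset Printing Implicit Defensive.
Import Order.TTheory GRing.Theory Num.Theory.
Local Open Scope ring_scope.

Definition pabs (p : nat) (q : rat) : rat :=
  if q == 0 then 0
  else (p%:R : rat) ^ ((logn p (absz (denq q)))%:Z - (logn p (absz (numq q)))%:Z).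

Definition cvg_to (K : fieldType) (abs : K -> rat) (u : nat -> K) (l : K) : Prop :=
  forall eps : rat, 0 < eps -> exists N : nat, forall n, (N <= n)%N -> abs (u n - l) < eps.

Definition cauchy_seq (K : fieldType) (abs : K -> rat) (u : nat -> K) : Prop :=
  forall eps : rat, 0 < eps -> exists N : nat,
    forall m n, (N <= m)%N -> (N <= n)%N -> abs (u m - u n) < eps.

(* (K, abs) is the field Q_p: a field with a non-archimedean absolute value
   extending |.|_p on Q (embedded via ratr), complete, with Q dense.
   This determines Q_p up to isometric isomorphism. *)
Definition is_Qp (p : nat) (K : fieldType) (abs : K -> rat) : Prop :=
  (forall x, 0 <= abs x) /\
  (forall x, abs x = 0 <-> x = 0) /\
  (forall x y, abs (x * y) = abs x * abs y) /\
  (forall x y, abs (x + y) <= Num.max (abs x) (abs y)) /\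
  (forall q : rat, abs (ratr q) = pabs p q) /\
  (forall u, cauchy_seq abs u -> exists l, cvg_to abs u l) /\
  (forall (x : K) (eps : rat), 0 < eps -> exists q : rat, abs (x - ratr q) < eps).

Definition digit_ok (p : nat) (a : int) : bool :=
  if p == 2%N then (a == 0) || (a == 1) else (absz a <= (p.-1)./2)%N.

(* x = sum_{k>=0} d_k p^(r+k), d_k in R, d_0 <> 0  (so r = v_p(x), a_{r+k} = d_k) *)
Definition trunc_sum (p : nat) (r : int) (d : nat -> int) (N : nat) : rat :=
  \sum_(k < N) (d k)%:~R * (p%:R : rat) ^ (r + (k : nat)%:Z).

Definition is_expansion (p : nat) (K : fieldType) (abs : K -> rat) (x : K)
    (r : int) (d : nat -> int) : Prop :=
  [/\ forall k, digit_ok p (d k), d 0%N != 0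
    & cvg_to abs (fun N => ratr (trunc_sum p r d N)) x].

Definition expansion_of (p : nat) (K : fieldType) (abs : K -> rat) (x : K)
  : int * (nat -> int) :=
  epsilon (inhabits (0%R, fun _ : nat => 0%R))
          (fun e => is_expansion p abs x e.1 e.2).

Definition vp (p : nat) (K : fieldType) (abs : K -> rat) (x : K) : int :=
  (expansion_of p abs x).1.

(* s(x) = sum_{n=r}^{0} a_n p^n,  t(x) = sum_{n=r}^{-1} a_n p^n  (0 for x = 0) *)
Definition s_part (p : nat) (K : fieldType) (abs : K -> rat) (x : K) : rat :=
  if x == 0 then 0 else
  let e := expansion_of p abs x in
  trunc_sum p e.1 e.2 (if e.1 <= 0 then (absz e.1).+1 else 0%N).

Definition t_part (p : nat) (K : fieldType) (abs : K -> rat) (x : K) : rat :=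
  if x == 0 then 0 else
  let e := expansion_of p abs x in
  trunc_sum p e.1 e.2 (if e.1 < 0 then absz e.1 else 0%N).

Definition algebraicQ (K : fieldType) (x : K) : Prop :=
  exists q : {poly rat}, q != 0 /\ root (map_poly ratr q) x.

Definition is_minpoly (K : fieldType) (x : K) (q : {poly rat}) : Prop :=
  [/\ q \is monic, root (map_poly ratr q) x
    & forall q' : {poly rat}, q' != 0 -> root (map_poly ratr q') x ->
        (size q <= size q')%N].

Definition minpolyQ (K : fieldType) (x : K) : {poly rat} :=
  epsilon (inhabits 0) (is_minpoly x).

Definition degQ (K : fieldType) (x : K) : nat := (size (minpolyQ x)).-1.

(* trace = sum of the conjugates = - (coefficient of X^(d-1) of the minimal polynomial) *)
Definition traceQ (K : fieldType) (x : K) : rat := - (minpolyQ x)`_(degQ x).-1.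

Definition roundQ (y : rat) : int := Num.floor (y + 1 / 2).

Definition sbar (p : nat) (K : fieldType) (abs : K -> rat) (x : K) : rat :=
  (roundQ ((traceQ x / (degQ x)%:R - s_part p abs x) / p%:R))%:~R * p%:R
  + s_part p abs x.

Definition tbar (p : nat) (K : fieldType) (abs : K -> rat) (x : K) : rat :=
  (roundQ (traceQ x / (degQ x)%:R - t_part p abs x))%:~R + t_part p abs x.

(* generic expansion algorithm: state alpha_n (None once the algorithm stopped) *)
Fixpoint alg_state (K : fieldType) (rule : nat -> K -> rat) (x : K) (n : nat)
  : option K :=
  match n with
  | 0%N => Some x
  | n'.+1 =>
    match alg_state rule x n' with
    | Some a => if a == ratr (rule n' a) then None
                else Some ((a - ratr (rule n' a))^-1)
    | None => None
    end
  end.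

Definition alg_digit (K : fieldType) (rule : nat -> K -> rat) (x : K) (n : nat) : rat :=
  if alg_state rule x n is Some a then rule n a else 0.

(* cf_eval b i k = [b_i, b_(i+1), ..., b_(i+k)] *)
Fixpoint cf_eval (b : nat -> rat) (i k : nat) : rat :=
  match k with
  | 0%N => b i
  | k'.+1 => b i + (cf_eval b i.+1 k')^-1
  end.

Definition convergent (b : nat -> rat) (n : nat) : rat := cf_eval b 0 n.

Definition ruleA (p : nat) (K : fieldType) (abs : K -> rat) (n : nat) (a : K) : rat :=
  if n == 0%N then sbar p abs a
  else if vp p abs a == 0 then sbar p abs a else tbar p abs a.

Definition ruleB (p : nat) (K : fieldType) (abs : K -> rat) (n : nat) (a : K) : rat :=
  if odd n then tbar p abs a else sbar p abs a.

Definition cf_converges (K : fieldType) (abs : K -> rat)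
    (rule : nat -> K -> rat) (x : K) : Prop :=
  (forall n, alg_state rule x n <> None) ->
  exists l : K, cvg_to abs (fun n => ratr (convergent (alg_digit rule x) n)) l.

(* Write alpha_(n+1) = 1 / (alpha_n - b_n).  Call a step admissible when
   |alpha_n - b_n| <= 1/p, or |alpha_n| >= p and |alpha_n - b_n| <= 1.
   Rounding moves sbar(alpha) away from the truncated expansion s(alpha) by a
   multiple of p and tbar(alpha) away from t(alpha) by an integer, so
   |alpha - sbar(alpha)| <= 1/p and |alpha - tbar(alpha)| <= 1.  Both
   algorithms use tbar only when |alpha_n| >= p: in Algorithm B right after an
   sbar-step, in Algorithm A when v_p(alpha_n) < 0.  Hence every step is
   admissible.  For admissible steps the errors
   E(i,k) = |alpha_i - [b_i, ..., b_(i+k)]| satisfy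
   E(i,k+1) = E(i+1,k) / |alpha_(i+1)|^2 with |alpha_(i+1)| >= 1 and
   |alpha_(i+1) alpha_(i+2)| >= p, so E(0, k+2m) <= p^-m. *)

From mathcomp Require Import all_boot all_order all_algebra.
From mathcomp Require Import ring lra zify.
From Stdlib Require Import ClassicalEpsilon.
Set Implicit Arguments.
Unset Strict Implicit.
Unset Printing Implicit Defensive.
Import Order.TTheory GRing.Theory Num.Theory.
Local Open Scope ring_scope.

Lemma exprn_lt1_small (R : archiRealFieldType) (c eps : R) :
  0 <= c -> c < 1 -> 0 < eps -> exists n, c ^+ n < eps.
Proof.
move=> c_ge0 c_lt1 eps_gt0.
have [->|c_neq0] := eqVneq c 0; first by exists 1%N; rewrite expr1.
have c_gt0 : 0 < c by rewrite lt_def c_neq0.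
set h := c^-1 - 1.
have h_gt0 : 0 < h by rewrite subr_gt0 invf_gt1.
have bernoulli n : 1 + h *+ n <= c^-1 ^+ n.
  have -> : c^-1 = 1 + h by rewrite addrC subrK.
  elim: n => [|n IHn]; first by rewrite expr0 mulr0n addr0.
  have := mulrn_wge0 n (ltW h_gt0).
  rewrite exprS mulrS; nra.
set n := Num.Def.archi_bound (h * eps)^-1.
have n_big : (h * eps)^-1 < n%:R by apply: archi_boundP; rewrite invr_ge0 ltW ?mulr_gt0.
exists n; rewrite -[c]invrK exprVn -[eps]invrK ltf_pV2 ?posrE ?exprn_gt0 ?invr_gt0 //.
apply: lt_le_trans (bernoulli n); rewrite -mulr_natr.
have : h * (h * eps)^-1 < h * n%:R by rewrite ltr_pM2l.
rewrite invfM mulrA divff ?gt_eqF // mul1r; lra.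
Qed.

Lemma div_sqr_le (R : realFieldType) (e w c : R) :
  0 <= e -> 0 < c <= 1 -> c^-1 <= w -> e / w ^+ 2 <= c * e.
Proof.
move=> e_ge0 /andP[c_gt0 c_le1] cw.
have w_gt0 : 0 < w by apply: lt_le_trans cw; rewrite invr_gt0.
have wc : w^-1 <= c by rewrite -[c]invrK lef_pV2 ?posrE ?invr_gt0.
have w_ge0 : 0 <= w^-1 by rewrite invr_ge0 ltW.
have := mulr_ge0 e_ge0 w_ge0; rewrite -exprVn expr2; nra.
Qed.

Fixpoint cfrac (F : fieldType) (b : nat -> F) (i k : nat) : F :=
  if k is k'.+1 then b i + (cfrac b i.+1 k')^-1 else b i.

(* MathComp proves that [ratr] is a ring morphism only into a numFieldType;
   characteristic zero is enough. *)
Section CharZeroRatr.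

Variable F : fieldType.
Hypothesis intr_neq0 : forall z : int, z != 0 -> z%:~R != 0 :> F.

Lemma ratr_frac (a b : int) : b != 0 -> ratr (a%:~R / b%:~R) = a%:~R / b%:~R :> F.
Proof.
move=> b_neq0; set q := a%:~R / b%:~R.
have num_den : numq q * b = a * denq q.
  apply: (@intr_inj rat); rewrite !intrM numqE /q.
  by field; rewrite intr_eq0.
by rewrite /ratr; apply/eqP; rewrite eqr_div ?intr_neq0 ?denq_neq0 // -!intrM num_den.
Qed.

Lemma ratr0 : ratr 0 = 0 :> F.
Proof. by rewrite /ratr mul0r. Qed.

Lemma ratrD x y : ratr (x + y) = ratr x + ratr y :> F.
Proof.
have dx := denq_neq0 x; have dy := denq_neq0 y.
have -> : x + y = (numq x * denq y + numq y * denq x)%:~R / (denq x * denq y)%:~R.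
  rewrite -{1}(divq_num_den x) -{1}(divq_num_den y) !(intrD, intrM).
  by field; rewrite !intr_eq0 dx dy.
rewrite ratr_frac ?mulf_neq0 // !(intrD, intrM) /ratr.
by field; rewrite !intr_neq0.
Qed.

Lemma ratrM x y : ratr (x * y) = ratr x * ratr y :> F.
Proof.
have dx := denq_neq0 x; have dy := denq_neq0 y.
have -> : x * y = (numq x * numq y)%:~R / (denq x * denq y)%:~R.
  rewrite -{1}(divq_num_den x) -{1}(divq_num_den y) !intrM.
  by field; rewrite !intr_eq0 dx dy.
rewrite ratr_frac ?mulf_neq0 // !intrM /ratr.
by field; rewrite !intr_neq0.
Qed.

Lemma ratrV x : ratr x^-1 = (ratr x)^-1 :> F.
Proof.
have [->|x_neq0] := eqVneq x 0; first by rewrite invr0 ratr0 invr0.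
rewrite -{1}(divq_num_den x) invf_div ratr_frac ?numq_eq0 //.
by rewrite /ratr invf_div.
Qed.

Lemma ratrXz x (z : int) : ratr (x ^ z) = ratr x ^ z :> F.
Proof.
have ratrXn n : ratr (x ^+ n) = ratr x ^+ n :> F.
  elim: n => [|n IHn]; first exact: ratr_int 1.
  by rewrite !exprS ratrM IHn.
by case: z => n; rewrite /= ?ratrV ratrXn.
Qed.

Lemma ratr_sum (I : Type) (r : seq I) (P : pred I) (G : I -> rat) :
  ratr (\sum_(i <- r | P i) G i) = \sum_(i <- r | P i) ratr (G i) :> F.
Proof. exact: (big_morph _ ratrD ratr0). Qed.

Lemma ratr_cf_eval (b : nat -> rat) (beta : nat -> F) :
  (forall n, ratr (b n) = beta n) -> forall i k, ratr (cf_eval b i k) = cfrac beta i k.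
Proof.
move=> b_beta i k; elim: k i => [|k IHk] i /=; first exact: b_beta.
by rewrite ratrD ratrV IHk b_beta.
Qed.

End CharZeroRatr.

Record ultra_abs (K : fieldType) (abs : K -> rat) : Prop := UltraAbs {
  ultra_abs_ge0 : forall x, 0 <= abs x;
  ultra_abs_eq0 : forall x, abs x = 0 <-> x = 0;
  ultra_absM : forall x y, abs (x * y) = abs x * abs y;
  ultra_abs_max : forall x y, abs (x + y) <= Num.max (abs x) (abs y)
}.

Section UltrametricAbs.

Variables (K : fieldType) (abs : K -> rat).
Hypothesis ua : ultra_abs abs.

Lemma abs_ge0 x : 0 <= abs x. Proof. exact: ultra_abs_ge0. Qed.
Lemma abs_eq0 x : abs x = 0 <-> x = 0. Proof. exact: ultra_abs_eq0. Qed.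
Lemma absM x y : abs (x * y) = abs x * abs y. Proof. exact: ultra_absM. Qed.
Lemma abs_ultra x y : abs (x + y) <= Num.max (abs x) (abs y).
Proof. exact: ultra_abs_max. Qed.

Lemma abs0 : abs 0 = 0.
Proof. exact/abs_eq0. Qed.

Lemma abs_gt0 x : x != 0 -> 0 < abs x.
Proof.
move=> x_neq0; rewrite lt_def abs_ge0 // andbT.
by apply: contraNneq x_neq0 => /abs_eq0 ->.
Qed.

Lemma abs1 : abs 1 = 1.
Proof.
have abs1_gt0 := abs_gt0 (oner_neq0 K).
apply: (mulfI (lt0r_neq0 abs1_gt0)); by rewrite -absM !mulr1.
Qed.

Lemma absN x : abs (- x) = abs x.
Proof.
have absN1 : abs (-1) = 1.
  have := abs_ge0 (-1); have : abs (-1) * abs (-1) = 1 by rewrite -absM mulrNN mulr1 abs1.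
  nra.
by rewrite -mulN1r absM absN1 mul1r.
Qed.

Lemma abs_distC x y : abs (x - y) = abs (y - x).
Proof. by rewrite -absN opprB. Qed.

Lemma absV x : abs x^-1 = (abs x)^-1.
Proof.
have [->|x_neq0] := eqVneq x 0; first by rewrite invr0 abs0 invr0.
apply: (mulfI (lt0r_neq0 (abs_gt0 x_neq0))).
by rewrite -absM !divff ?abs1 // lt0r_neq0 // abs_gt0.
Qed.

Lemma absXz x (z : int) : abs (x ^ z) = abs x ^ z.
Proof.
have absXn n : abs (x ^+ n) = abs x ^+ n.
  by elim: n => [|n IHn]; rewrite ?abs1 // !exprS absM IHn.
by case: z => n; rewrite /= ?absV absXn.
Qed.

Lemma absD_le x y C : abs x <= C -> abs y <= C -> abs (x + y) <= C.
Proof. by move=> xC yC; apply: le_trans (abs_ultra x y) _; rewrite ge_max xC. Qed.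

Lemma abs_sum_le (I : Type) (r : seq I) (P : pred I) (G : I -> K) C :
  0 <= C -> (forall i, P i -> abs (G i) <= C) -> abs (\sum_(i <- r | P i) G i) <= C.
Proof.
move=> C_ge0 GC; apply: (big_ind (fun s => abs s <= C)) => //; first by rewrite abs0.
by move=> x y; apply: absD_le.
Qed.

Lemma absDl_eq x y : abs y < abs x -> abs (x + y) = abs x.
Proof.
move=> yx; apply/le_anti/andP; split; first by apply: absD_le => //; exact: ltW.
have := abs_ultra (x + y) (- y); rewrite addrK absN le_max.
by case/orP => // /(lt_le_trans yx); rewrite ltxx.
Qed.

Section CfracCriterion.

Variable c : rat.
Hypotheses (c_gt0 : 0 < c) (c_lt1 : c < 1).

Definition admissible_digit (a b : K) : Prop :=
  abs (a - b) <= c \/ (c^-1 <= abs a /\ abs (a - b) <= 1).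

Variables (al beta : nat -> K).
Hypotheses (al_neq : forall n, al n != beta n)
  (alS : forall n, al n.+1 = (al n - beta n)^-1)
  (beta_adm : forall n, admissible_digit (al n) (beta n)).

Local Notation err i k := (abs (al i - cfrac beta i k)).

Lemma abs_alS n : abs (al n.+1) = (abs (al n - beta n))^-1.
Proof. by rewrite alS absV. Qed.

Lemma adm_dist_le1 n : abs (al n - beta n) <= 1.
Proof. by case: (beta_adm n) => [h|[_ //]]; apply: le_trans h (ltW c_lt1). Qed.

Lemma abs_alS_ge1 n : 1 <= abs (al n.+1).
Proof. by rewrite abs_alS invf_ge1 ?adm_dist_le1 ?abs_gt0 ?subr_eq0. Qed.

Lemma adm_dist_ltS n : abs (al n.+1 - beta n.+1) < abs (al n.+1).
Proof.
case: (beta_adm n.+1) => [h|[h1 h2]].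
  exact: le_lt_trans h (lt_le_trans c_lt1 (abs_alS_ge1 n)).
by apply: le_lt_trans h2 (lt_le_trans _ h1); rewrite invf_gt1.
Qed.

Lemma abs_cfracS k n : abs (cfrac beta n.+1 k) = abs (al n.+1).
Proof.
have abs_betaS m : abs (beta m.+1) = abs (al m.+1).
  by rewrite -(subKr (al m.+1) (beta m.+1)) absDl_eq ?absN ?adm_dist_ltS.
elim: k n => [|k IHk] n //=.
by rewrite absDl_eq abs_betaS // absV IHk abs_alS invrK adm_dist_ltS.
Qed.

Lemma cfrac_errS i k : err i k.+1 = err i.+1 k / abs (al i.+1) ^+ 2.
Proof.
have abs_al_gt0 : 0 < abs (al i.+1) := lt_le_trans ltr01 (abs_alS_ge1 i).
have al_neq0 : al i.+1 != 0 by apply: contraTneq abs_al_gt0 => ->; rewrite abs0 ltxx.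
have cfrac_neq0 : cfrac beta i.+1 k != 0.
  by apply: contraTneq abs_al_gt0; rewrite -(abs_cfracS k) => ->; rewrite abs0 ltxx.
have -> : al i - cfrac beta i k.+1 =
          (cfrac beta i.+1 k - al i.+1) / (al i.+1 * cfrac beta i.+1 k).
  have dist_eq : al i - beta i = (al i.+1)^-1 by rewrite alS invrK.
  by rewrite /= opprD addrA dist_eq; field; apply/andP.
by rewrite absM absV absM (abs_cfracS k) abs_distC expr2.
Qed.

Lemma cfrac_err_le1 k i : err i k <= 1.
Proof.
elim: k i => [|k IHk] i; first exact: adm_dist_le1.
rewrite cfrac_errS; apply: le_trans (IHk i.+1); rewrite -[X in _ <= X]mul1r.
by apply: div_sqr_le; rewrite ?abs_ge0 ?ltr01 ?lexx ?invr1 ?abs_alS_ge1.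
Qed.

Lemma cfrac_errSS i k : err i k.+2 <= c * err i.+2 k.
Proof.
have growth : c^-1 <= abs (al i.+1 * al i.+2).
  have c_inv_gt0 : 0 < c^-1 by rewrite invr_gt0.
  rewrite absM; case: (beta_adm i.+1) => [h|[h _]].
    rewrite -[c^-1]mul1r; apply: ler_pM; rewrite ?ler01 ?invr_ge0 ?(ltW c_gt0) ?abs_alS_ge1 //.
    by rewrite abs_alS lef_pV2 ?posrE ?abs_gt0 ?subr_eq0.
  by rewrite -[c^-1]mulr1; apply: ler_pM; rewrite ?ler01 ?invr_ge0 ?(ltW c_gt0) ?abs_alS_ge1.
rewrite cfrac_errS cfrac_errS -mulrA -invfM -exprMn -absM [al i.+2 * _]mulrC.
by apply: div_sqr_le; rewrite ?abs_ge0 ?c_gt0 ?(ltW c_lt1).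
Qed.

Lemma cfrac_err_bound m i k : err i (k + m.*2) <= c ^+ m.
Proof.
elim: m i => [|m IHm] i; first by rewrite addn0 expr0 cfrac_err_le1.
rewrite doubleS !addnS exprS.
apply: le_trans (cfrac_errSS _ _) _; rewrite ler_pM2l //.
Qed.

Lemma cfrac_cvg : cvg_to abs (cfrac beta 0) (al 0).
Proof.
move=> eps eps_gt0.
have [m cm_lt] := exprn_lt1_small (ltW c_gt0) c_lt1 eps_gt0.
exists m.*2 => n le_mn; rewrite abs_distC -(subnK le_mn).
exact: le_lt_trans (cfrac_err_bound _ _ _) cm_lt.
Qed.

End CfracCriterion.

End UltrametricAbs.

Definition alg_orbit (K : fieldType) (rule : nat -> K -> rat) (al : nat -> K) : Prop :=
  forall n, al n != ratr (rule n (al n)) /\ al n.+1 = (al n - ratr (rule n (al n)))^-1.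

Lemma alg_state_orbit (K : fieldType) (rule : nat -> K -> rat) x :
  (forall n, alg_state rule x n <> None) ->
  exists2 al, alg_orbit rule al & forall n, alg_state rule x n = Some (al n).
Proof.
move=> running; pose al n := odflt x (alg_state rule x n).
have al_state n : alg_state rule x n = Some (al n).
  by rewrite /al; case: alg_state (running n).
exists al => // n; have := al_state n.+1; rewrite /= al_state.
by case: eqP => // /eqP al_neq [<-].
Qed.

Lemma digit_in_class (p : nat) (m : int) : prime p ->
  exists2 a, digit_ok p a & (p %| m - a)%Z.
Proof.
move=> p_prime; have p_gt1 := prime_gt1 p_prime.
have p_neq0 : p%:Z != 0 by rewrite eqz_nat -lt0n ltnW.
have r_ge0 := modz_ge0 m p_neq0.
have r_lt : (m %% p)%Z < p by rewrite ltz_pmod // ltz_nat ltnW.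
have r_class : (p %| m - (m %% p)%Z)%Z by rewrite {1}(divz_eq m p) addrK dvdz_mull.
rewrite /digit_ok; case: eqP => [p2|/eqP p_neq2].
  by exists (m %% p)%Z => //; move: r_lt; rewrite p2; lia.
have [k p_odd] : exists k, p = k.*2.+1.
  case: (even_prime p_prime) => [/eqP|p_odd]; first by rewrite (negbTE p_neq2).
  by exists p./2; rewrite -[LHS]odd_double_half p_odd.
have half_p : (p.-1)./2 = k by rewrite p_odd /= doubleK.
rewrite half_p; have [r_small|r_big] := lerP (m %% p)%Z k.
  by exists (m %% p)%Z => //; lia.
exists ((m %% p)%Z - p%:Z); first lia.
by rewrite opprB addrA addrAC rpredD ?dvdzz.
Qed.

Lemma pabs_intr (p : nat) (z : int) : z != 0 ->
  pabs p z%:~R = ((p%:R : rat) ^+ logn p `|z|)^-1.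
Proof.
move=> z_neq0; rewrite /pabs intr_eq0 (negbTE z_neq0) numq_int denq_int logn1.
by rewrite sub0r -exprnN.
Qed.

Lemma pabs_le1_ndvd_den (p : nat) (q : rat) : prime p -> pabs p q <= 1 ->
  ~~ (p %| `|denq q|)%N.
Proof.
move=> p_prime; apply: contraTN => p_dvd_den.
have p_ndvd_num : ~~ (p %| `|numq q|)%N.
  apply/negP => p_dvd_num; have /eqP gcd1 := coprime_num_den q.
  have := prime_gt1 p_prime; suff /eqP -> : (p == 1)%N by [].
  by rewrite -dvdn1 -gcd1 dvdn_gcd p_dvd_num.
have q_neq0 : q != 0 by rewrite -numq_eq0; apply: contraNneq p_ndvd_num => ->.
rewrite /pabs (negbTE q_neq0) (@logn_coprime p `|numq q|) ?prime_coprime // subr0 -ltNge /=.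
rewrite exprn_egt1 ?ltr1n ?prime_gt1 // -lt0n logn_gt0 mem_primes p_prime p_dvd_den.
by rewrite absz_gt0 denq_neq0.
Qed.

Lemma digit_ok_lt (p : nat) (a : int) : prime p -> digit_ok p a -> (`|a| < p)%N.
Proof.
move=> /prime_gt1 p_gt1; rewrite /digit_ok; case: eqP => [-> | _]; first lia.
by move=> /leq_ltn_trans; apply; rewrite -divn2; lia.
Qed.

Lemma digit_num_den (p : nat) (n d : int) : prime p -> ~~ (p %| `|d|)%N ->
  exists2 a, digit_ok p a & (p %| n - a * d)%Z.
Proof.
move=> p_prime p_ndvd_d.
have [u [v /= uv]] := Bezoutz p d.
have : gcdz p d = 1.
  by move: p_ndvd_d; rewrite -prime_coprime // /gcdz absz_nat => /eqP ->.
move=> gcd1; rewrite gcd1 in uv; have [a a_ok a_class] := digit_in_class (n * v) p_prime.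
exists a => //; have -> : n - a * d = n * (u * p) + d * (n * v - a).
  by rewrite -[n in LHS]mulr1 -uv; ring.
by rewrite rpredD ?dvdz_mull ?dvdz_mulr ?dvdzz.
Qed.

Section Padic.

Variables (p : nat) (K : fieldType) (abs : K -> rat).
Hypotheses (p_prime : prime p) (Qp : is_Qp p abs).

Local Notation c := ((p%:R : rat)^-1).

Lemma Qp_ultra_abs : ultra_abs abs.
Proof. by case: Qp => ge0 [eq0 [M [max _]]]; split. Qed.

Local Notation ua := Qp_ultra_abs.

Lemma abs_ratr q : abs (ratr q) = pabs p q.
Proof. by case: Qp => _ [_ [_ [_ [-> _]]]]. Qed.

Lemma abs_approx x eps : 0 < eps -> exists q : rat, abs (x - ratr q) < eps.
Proof. by case: Qp => _ [_ [_ [_ [_ [_ approx]]]]]; apply: approx. Qed.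

Lemma pR_gt1 : 1 < (p%:R : rat).
Proof. by rewrite ltr1n prime_gt1. Qed.

Lemma pR_gt0 : 0 < (p%:R : rat).
Proof. exact: lt_trans ltr01 pR_gt1. Qed.

Lemma c_gt0 : 0 < c.
Proof. by rewrite invr_gt0 pR_gt0. Qed.

Lemma c_lt1 : c < 1.
Proof. by rewrite invf_lt1 ?pR_gt1 ?pR_gt0. Qed.

Lemma c_exprz_le (z1 z2 : int) : z1 <= z2 -> c ^ z2 <= c ^ z1.
Proof.
by move=> z12; rewrite !exprz_inv; apply: (ler_weXz2l (ltW pR_gt1)); rewrite lerN2.
Qed.

Lemma abs_intr (z : int) : abs (z%:~R : K) = pabs p z%:~R.
Proof. by rewrite -abs_ratr ratr_int. Qed.

Lemma intr_neq0 (z : int) : z != 0 -> (z%:~R : K) != 0.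
Proof.
move=> z_neq0; have : abs (z%:~R : K) != 0.
  by rewrite abs_intr pabs_intr // invr_eq0 expf_neq0 // lt0r_neq0 // pR_gt0.
by apply: contra_neq => ->; rewrite (abs0 ua).
Qed.

Lemma abs_intr_le1 (z : int) : abs (z%:~R : K) <= 1.
Proof.
have [->|z_neq0] := eqVneq z 0; first by rewrite (abs0 ua) ler01.
by rewrite abs_intr pabs_intr // invf_le1 ?exprn_ege1 ?exprn_gt0 ?ltW ?pR_gt1 ?pR_gt0.
Qed.

Lemma abs_intr_eq1 (z : int) : ~~ (p %| `|z|)%N -> abs (z%:~R : K) = 1.
Proof.
move=> p_ndvd; have z_neq0 : z != 0 by apply: contraNneq p_ndvd => ->.
by rewrite abs_intr pabs_intr // logn_coprime ?prime_coprime // expr0 invr1.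
Qed.

Lemma abs_p : abs (p%:R : K) = c.
Proof.
rewrite -[p%:R]/((p%:Z)%:~R) abs_intr pabs_intr ?logn_prime ?eqxx ?expr1 //.
by rewrite eqz_nat -lt0n prime_gt0.
Qed.

Lemma abs_intr_dvd (z : int) : (p %| z)%Z -> abs (z%:~R : K) <= c.
Proof.
case/dvdzP=> w ->; rewrite intrM (absM ua) abs_p -[X in _ <= X]mul1r.
by rewrite ler_pM2r ?c_gt0 ?abs_intr_le1.
Qed.

Lemma abs_pXz (z : int) : abs ((p%:R : K) ^ z) = c ^ z.
Proof. by rewrite (absXz ua) abs_p. Qed.

Lemma abs_digit (a : int) : digit_ok p a -> a != 0 -> abs (a%:~R : K) = 1.
Proof.
move=> a_ok a_neq0; apply: abs_intr_eq1; apply: contraTN (digit_ok_lt p_prime a_ok).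
by move/dvdn_leq; rewrite absz_gt0 a_neq0 -leqNgt => /(_ isT).
Qed.

Lemma ratr_trunc_sum r d N : ratr (trunc_sum p r d N) =
  \sum_(k < N) (d k)%:~R * (p%:R : K) ^ (r + k%:Z).
Proof.
rewrite /trunc_sum (ratr_sum intr_neq0); apply: eq_bigr => k _.
by rewrite (ratrM intr_neq0) ratr_int (ratrXz intr_neq0) ratr_nat.
Qed.

Lemma abs_value_group x : x != 0 -> exists r : int, abs x = c ^ r.
Proof.
move=> x_neq0; have [q xq] := abs_approx x (abs_gt0 ua x_neq0).
have abs_q : abs (ratr q : K) = abs x.
  by rewrite -[ratr q](subKr x) (absDl_eq ua) // (absN ua).
have q_neq0 : q != 0.
  by apply: contraTneq (abs_gt0 ua x_neq0) => q0; rewrite -abs_q q0 abs_ratr /pabs eqxx ltxx.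
exists (Posz (logn p `|numq q|) - Posz (logn p `|denq q|)).
by rewrite -abs_q abs_ratr /pabs (negbTE q_neq0) exprz_inv opprB.
Qed.

Lemma digit_approx y : abs y <= 1 -> exists a, digit_ok p a /\ abs (y - a%:~R) <= c.
Proof.
move=> y_le1; have [q yq] := abs_approx y c_gt0.
have q_le1 : pabs p q <= 1.
  rewrite -abs_ratr -[ratr q](subKr y) (absD_le ua) // (absN ua).
  exact: le_trans (ltW yq) (ltW c_lt1).
have [a a_ok a_class] := digit_num_den (numq q) p_prime (pabs_le1_ndvd_den p_prime q_le1).
exists a; split => //; rewrite -[y](subrK (ratr q)) -addrA (absD_le ua) ?(ltW yq) //.
have den_neq0 : ((denq q)%:~R : K) != 0 by rewrite intr_neq0 ?denq_neq0.
have -> : ratr q - a%:~R = (numq q - a * denq q)%:~R / (denq q)%:~R :> K.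
  by rewrite /ratr intrB intrM; field.
rewrite (absM ua) (absV ua) (@abs_intr_eq1 (denq q)) ?pabs_le1_ndvd_den // invr1 mulr1.
exact: abs_intr_dvd.
Qed.

Lemma pK_neq0 : (p%:R : K) != 0.
Proof. by rewrite -[p%:R]/((p%:Z)%:~R) intr_neq0 // eqz_nat -lt0n prime_gt0. Qed.

Definition digit_of (y : K) : int :=
  epsilon (inhabits 0) (fun a => digit_ok p a /\ abs (y - a%:~R) <= c).

Lemma digit_ofP y :
  abs y <= 1 -> digit_ok p (digit_of y) /\ abs (y - (digit_of y)%:~R) <= c.
Proof. by move/digit_approx; apply: epsilon_spec. Qed.

Fixpoint digit_rem (y : K) (k : nat) : K :=
  if k is k'.+1 then (digit_rem y k' - (digit_of (digit_rem y k'))%:~R) / p%:R else y.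

Lemma abs_digit_rem_le1 y k : abs y <= 1 -> abs (digit_rem y k) <= 1.
Proof.
move=> y_le1; elim: k => //= k IHk; have [_ close] := digit_ofP IHk.
rewrite (absM ua) (absV ua) abs_p invrK -[X in _ <= X](mulVf (lt0r_neq0 pR_gt0)).
by rewrite ler_pM2r ?pR_gt0.
Qed.

Lemma digit_rem_expansion y r N : y * (p%:R : K) ^ r =
  \sum_(k < N) (digit_of (digit_rem y k))%:~R * p%:R ^ (r + k%:Z)
  + p%:R ^ (r + N%:Z) * digit_rem y N.
Proof.
elim: N => [|N IHN]; first by rewrite big_ord0 add0r addr0 mulrC.
rewrite big_ord_recr IHN /= -addrA; congr (_ + _).
have -> : r + N.+1%:Z = (r + N%:Z) + 1 by lia.
by rewrite (expfzDr (r + N%:Z) 1 pK_neq0) expr1z; field; rewrite pK_neq0.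
Qed.

Lemma expansion_exists x : x != 0 ->
  exists e : int * (nat -> int), is_expansion p abs x e.1 e.2.
Proof.
move=> x_neq0; have [r abs_x] := abs_value_group x_neq0.
set y := x * (p%:R : K) ^ (- r).
have abs_y : abs y = 1.
  by rewrite (absM ua) abs_pXz abs_x -expfzDr ?subrr ?expr0z // lt0r_neq0 // c_gt0.
have rem_le1 k : abs (digit_rem y k) <= 1 by rewrite abs_digit_rem_le1 // abs_y.
exists (r, fun k => digit_of (digit_rem y k)); split => /=.
- by move=> k; case: (digit_ofP (rem_le1 k)).
- have [_] := digit_ofP (rem_le1 0); apply: contraTneq => /= ->.
  by rewrite subr0 abs_y -ltNge c_lt1.
move=> eps eps_gt0.
have [N cN] := exprn_lt1_small (ltW c_gt0) c_lt1 (divr_gt0 eps_gt0 (exprz_gt0 r c_gt0)).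
exists N => n le_Nn; rewrite ratr_trunc_sum.
have x_eq : x = \sum_(k < n) (digit_of (digit_rem y k))%:~R * p%:R ^ (r + k%:Z)
                + p%:R ^ (r + n%:Z) * digit_rem y n.
  by rewrite -digit_rem_expansion /y -mulrA -(expfzDr _ _ pK_neq0) addNr expr0z mulr1.
rewrite {1}x_eq opprD addrA subrr sub0r (absN ua) (absM ua) abs_pXz.
apply: le_lt_trans (ler_piMr (ltW (exprz_gt0 _ c_gt0)) (rem_le1 n)) _.
apply: le_lt_trans (c_exprz_le (_ : r + N%:Z <= r + n%:Z)) _; first by lia.
by rewrite expfzDr ?lt0r_neq0 ?c_gt0 // mulrC -ltr_pdivlMr ?exprz_gt0 ?c_gt0.
Qed.

Lemma expansion_ofP x : x != 0 ->
  is_expansion p abs x (expansion_of p abs x).1 (expansion_of p abs x).2.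
Proof. by move/expansion_exists; apply: epsilon_spec. Qed.

Lemma expansion_trunc_close x r d N : is_expansion p abs x r d ->
  abs (x - ratr (trunc_sum p r d N)) <= c ^ (r + N%:Z).
Proof.
case=> d_ok _ cvg.
have [M close_M] := cvg _ (exprz_gt0 (r + N%:Z) c_gt0).
have {}close_M := close_M (N + M)%N (leq_addl _ _).
rewrite -(subrK (ratr (trunc_sum p r d (N + M))) x) -addrA (absD_le ua) //.
  by rewrite (abs_distC ua) ltW.
set term := fun k : nat => (d k)%:~R * (p%:R : K) ^ (r + k%:Z).
rewrite !ratr_trunc_sum -!(big_mkord xpredT term).
rewrite (big_cat_nat (leq0n N) (leq_addr M N)).
rewrite /= addrAC subrr add0r big_nat_cond; apply: (abs_sum_le ua).
  exact/ltW/exprz_gt0/c_gt0.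
move=> k /andP[/andP[le_Nk _] _]; rewrite (absM ua) abs_pXz.
apply: le_trans (ler_piMl (ltW (exprz_gt0 _ c_gt0)) (abs_intr_le1 _)) _.
by apply: c_exprz_le; lia.
Qed.

Lemma abs_expansion x r d : is_expansion p abs x r d -> abs x = c ^ r.
Proof.
move=> x_exp; have := expansion_trunc_close 1 x_exp.
case: x_exp => d_ok d0_neq0 _; rewrite ratr_trunc_sum big_ord1 addr0.
set lead := _ * _ => close1.
have abs_lead : abs lead = c ^ r by rewrite (absM ua) abs_digit // mul1r abs_pXz.
have -> : x = lead + (x - lead) by rewrite addrC subrK.
rewrite (absDl_eq ua) // abs_lead; apply: le_lt_trans close1 _.
by rewrite expfzDr ?lt0r_neq0 ?c_gt0 // expr1z gtr_pMr ?exprz_gt0 ?c_gt0 ?c_lt1.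
Qed.

Lemma abs_vp x : x != 0 -> abs x = c ^ vp p abs x.
Proof. by move/expansion_ofP/abs_expansion. Qed.

Lemma s_part_close x : abs (x - ratr (s_part p abs x)) <= c.
Proof.
rewrite /s_part; have [->|x_neq0] := eqVneq x 0.
  by rewrite ?eqxx ratr0 subrr (abs0 ua) ltW ?c_gt0.
move: (expansion_ofP x_neq0).
case: (expansion_of p abs x) => r d /= x_exp.
apply: le_trans (expansion_trunc_close _ x_exp) _.
by rewrite -[X in _ <= X]expr1z; apply: c_exprz_le; case: ifP; lia.
Qed.

Lemma t_part_close x : abs (x - ratr (t_part p abs x)) <= 1.
Proof.
rewrite /t_part; have [->|x_neq0] := eqVneq x 0.
  by rewrite ?eqxx ratr0 subrr (abs0 ua) ler01.
move: (expansion_ofP x_neq0).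
case: (expansion_of p abs x) => r d /= x_exp.
apply: le_trans (expansion_trunc_close _ x_exp) _.
by rewrite -(expr0z c); apply: c_exprz_le; case: ifP; lia.
Qed.

Lemma sbar_close x : abs (x - ratr (sbar p abs x)) <= c.
Proof.
rewrite /sbar (ratrD intr_neq0) (ratrM intr_neq0) ratr_int ratr_nat opprD addrCA.
rewrite (absD_le ua) ?s_part_close // (absN ua) (absM ua) abs_p.
by rewrite ler_piMl ?abs_intr_le1 ?ltW ?c_gt0.
Qed.

Lemma tbar_close x : abs (x - ratr (tbar p abs x)) <= 1.
Proof.
rewrite /tbar (ratrD intr_neq0) ratr_int opprD addrCA.
by rewrite (absD_le ua) ?t_part_close // (absN ua) abs_intr_le1.
Qed.

Lemma cf_converges_of_admissible rule x :
  (forall al, alg_orbit rule al ->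
     forall n, admissible_digit abs c (al n) (ratr (rule n (al n)))) ->
  cf_converges abs rule x.
Proof.
move=> adm /alg_state_orbit [al orb al_state]; exists x.
have al0 : al 0%N = x by case: (al_state 0%N).
have digits n : ratr (alg_digit rule x n) = ratr (rule n (al n)) :> K.
  by rewrite /alg_digit al_state.
have := cfrac_cvg ua c_gt0 c_lt1 (fun n => (orb n).1) (fun n => (orb n).2) (adm al orb).
rewrite al0 => cvg eps /cvg [N close]; exists N => n /close.
by rewrite /convergent (ratr_cf_eval intr_neq0 digits).
Qed.

Lemma orbitS_abs_ge rule al n e : alg_orbit rule al -> 0 < e ->
  abs (al n - ratr (rule n (al n))) <= e -> e^-1 <= abs (al n.+1).
Proof.
case/(_ n)=> al_neq -> e_gt0 dist_le.
by rewrite (absV ua) lef_pV2 ?posrE ?(abs_gt0 ua) ?subr_eq0.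
Qed.

Lemma ruleB_admissible al : alg_orbit (ruleB p abs) al ->
  forall n, admissible_digit abs c (al n) (ratr (ruleB p abs n (al n))).
Proof.
move=> orb n; rewrite /ruleB; case: ifP => n_odd; last by left; exact: sbar_close.
right; split; last exact: tbar_close.
case: n n_odd => // m /= /negbTE m_even; apply: (orbitS_abs_ge orb c_gt0).
by rewrite /ruleB m_even sbar_close.
Qed.

Lemma ruleA_admissible al : alg_orbit (ruleA p abs) al ->
  forall n, admissible_digit abs c (al n) (ratr (ruleA p abs n (al n))).
Proof.
move=> orb; elim=> [|n IHn]; first by left; exact: sbar_close.
rewrite /ruleA /=; case: eqP => [_|vp_neq0]; first by left; exact: sbar_close.
right; split; last exact: tbar_close.
have al_ge1 : 1 <= abs (al n.+1).
  rewrite -invr1; apply: (orbitS_abs_ge orb ltr01).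
  by case: IHn => [/le_trans|[_ //]]; apply; exact: ltW c_lt1.
have al_neq0 : al n.+1 != 0 by apply: contraTneq al_ge1 => ->; rewrite (abs0 ua) ler10.
rewrite (abs_vp al_neq0) in al_ge1 *; rewrite -exprN1; apply: c_exprz_le.
rewrite leNgt; apply/negP => vp_gt; have vp_ge1 : 1 <= vp p abs (al n.+1) by lia.
have := le_trans al_ge1 (c_exprz_le vp_ge1).
by rewrite expr1z leNgt c_lt1.
Qed.

End Padic.

Theorem proposition3 (p : nat) (K : fieldType) (abs : K -> rat) (x : K) :
  prime p -> is_Qp p abs -> algebraicQ x ->
  cf_converges abs (ruleA p abs) x /\ cf_converges abs (ruleB p abs) x.
Proof.
(* Algebraicity only gives a meaning to the trace in [sbar] and [tbar]; the
   rounding term it feeds is invisible p-adically. *)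
move=> p_prime Qp _; split; apply: (cf_converges_of_admissible p_prime Qp).
  exact: ruleA_admissible.
exact: ruleB_admissible.
Qed.
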